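(* Let $S$ be a finite set of points in $\mathbb{R}^k$ with the Euclidean metric $d$, and let $(S_i,p_i,q_i,d_i)_{1\le i\le L}$ be a grid-based sparse partition of $S$ with grid box side lengths $g_i=d_i/(6k)$. Let $j=L-\lceil\log_3(2\sqrt{k})\rceil$ and assume $j\ge 1$. Then for any two distinct points $a,b\in S\setminus S_j$, $\delta(S)<d(a,b)$.
   Context: $d(x,T)=\min\{d(x,y):y\in T\setminus\{x\}\}$ and $\delta(S)=\min\{d(p,q):p,q\in S,p\ne q\}$. Grid-based sparse partition of $S$: levels $i=1,\dots,L$ with $S_1=S$; pivot $p_i$ chosen from $S_i$, $q_i$ a nearest neighbor of $p_i$ in $S_i$, $d_i=d(p_i,q_i)$; $G_i$ is the axis-aligned grid with boxes of side length $g_i=d_i/(6k)$; a point $x\in S_i$ is sparse at level $i$ if no other point of $S_i$ lies in the $3^k$ boxes of $G_i$ formed by the box containing $x$ and its bordering boxes; $S_i'$ is the set of sparse points of $S_i$; $S_{i+1}=S_i\setminus S_i'$; $S_{L+1}=\emptyset$. *)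

From HB Require Import structures.
From mathcomp Require Import all_boot all_order all_algebra.
From mathcomp Require Import all_classical all_reals all_analysis.
Set Implicit Arguments. Unset Strict Implicit. Unset Printing Implicit Defensive.
Import Order.TTheory GRing.Theory Num.Theory.
Local Open Scope classical_set_scope.
Local Open Scope ring_scope.

(* Points of R^k are row vectors 'rV[R]_k; coordinate t of x is x ord0 t. *)

Definition eucl_dist (R : realType) (k : nat) (x y : 'rV[R]_k) : R :=
  Num.sqrt (\sum_(t < k) (x ord0 t - y ord0 t) ^+ 2).

(* delta(S) = min { d(p,q) : p,q in S, p <> q } (a minimum, since S is finite). *)
Definition delta (R : realType) (k : nat) (S : set 'rV[R]_k) : R :=
  inf [set r | exists p q, [/\ S p, S q, p <> q & r = eucl_dist p q]].

(* Index (along coordinate t) of the box of the grid with side g containing x;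
   the grid is anchored at the origin, boxes are [m g, (m+1) g). *)
Definition box_index (R : realType) (k : nat) (g : R) (x : 'rV[R]_k) (t : 'I_k) : int :=
  Num.floor (x ord0 t / g).

(* y lies in the box of x or in one of its bordering boxes (3^k boxes in all). *)
Definition in_nbhd_boxes (R : realType) (k : nat) (g : R) (x y : 'rV[R]_k) : Prop :=
  forall t : 'I_k, `|box_index g y t - box_index g x t| <= 1.

Definition sparse (R : realType) (k : nat) (T : set 'rV[R]_k) (g : R) (x : 'rV[R]_k) : Prop :=
  forall y, T y -> y <> x -> ~ in_nbhd_boxes g x y.

Definition grid_sparse_partition (R : realType) (k : nat) (S : set 'rV[R]_k)
  (L : nat) (Ss : nat -> set 'rV[R]_k) (p q : nat -> 'rV[R]_k) : Prop :=
  [/\ Ss 1%N = S,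
      (forall i, (1 <= i <= L)%N ->
         [/\ Ss i (p i), Ss i (q i), q i <> p i &
             (forall y, Ss i y -> y <> p i -> eucl_dist (p i) (q i) <= eucl_dist (p i) y)]),
      (forall i, (1 <= i <= L)%N -> forall x,
         Ss i.+1 x <-> (Ss i x /\ ~ sparse (Ss i) (eucl_dist (p i) (q i) / (6 * k%:R)) x))
    & Ss L.+1 = set0].

From HB Require Import structures.
From mathcomp Require Import all_boot all_order all_algebra.
From mathcomp Require Import all_classical all_reals all_analysis.
From mathcomp Require Import zify ring lra.
Import Order.TTheory GRing.Theory Num.Theory.
Local Open Scope classical_set_scope.
Local Open Scope ring_scope.
Set Implicit Arguments. Unset Strict Implicit.

(* A point removed at level i is sparse there, so it is at distance at least
   g_i = d_i/(6k) from every other point of S_i.  A point surviving level i has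
   a neighbour in the adjacent boxes that survives too, so
   d_{i+1} <= 2 g_i sqrt k = d_i/(3 sqrt k), and two such steps give
   d_{i+2} <= d_i/(9k) < g_i.  As the ceiling is positive, j < L, so a and b both
   lie in some S_i with i+2 <= L from which one of them is removed; hence
   delta(S) <= d_{i+2} < g_i <= d(a,b). *)

Lemma floor_dist_le1 (R : realType) (x y : R) :
  `|x - y| < 1 -> `|Num.floor x - Num.floor y| <= 1.
Proof.
rewrite ltr_norml => /andP[xy1 yx1].
have := floor_itv x; have := floor_itv y.
rewrite !intrD => /andP[y1 y2] /andP[x1 x2].
have hx : Num.floor x < Num.floor y + 2 by rewrite floor_lt_int intrD; lra.
have hy : Num.floor y < Num.floor x + 2 by rewrite floor_lt_int intrD; lra.
rewrite ler_norml; apply/andP; split; lia.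
Qed.

Lemma dist_lt2_of_floor (R : realType) (x y : R) :
  `|Num.floor x - Num.floor y| <= 1 -> `|x - y| < 2.
Proof.
rewrite ler_norml => /andP[h1 h2].
have hx : (Num.floor x)%:~R <= (Num.floor y + 1)%:~R :> R by rewrite ler_int; lia.
have hy : (Num.floor y)%:~R <= (Num.floor x + 1)%:~R :> R by rewrite ler_int; lia.
have := floor_itv x; have := floor_itv y; rewrite !intrD in hx hy *.
move=> /andP[y1 y2] /andP[x1 x2]; rewrite ltr_norml; apply/andP; split; lra.
Qed.

Section EuclideanDistance.
Variables (R : realType) (k : nat).
Implicit Types (x y : 'rV[R]_k).

Lemma eucl_distC x y : eucl_dist x y = eucl_dist y x.
Proof. by congr Num.sqrt; apply: eq_bigr => t _; rewrite -sqrrN opprB. Qed.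

Lemma eucl_dist_gt0 x y : x <> y -> 0 < eucl_dist x y.
Proof.
move=> xy; rewrite sqrtr_gt0 lt_def sumr_ge0 ?andbT => [|t _]; last first.
  exact: sqr_ge0.
apply/eqP => /psumr_eq0P sum0; apply: xy; apply/rowP => t; apply/eqP.
by rewrite -subr_eq0 -sqrf_eq0 sum0 // => s _; exact: sqr_ge0.
Qed.

Lemma coord_dist_le_eucl_dist x y t : `|x ord0 t - y ord0 t| <= eucl_dist x y.
Proof.
rewrite -sqrtr_sqr ler_sqrt ?sumr_ge0 // => [|s _]; last exact: sqr_ge0.
by rewrite (bigD1 t) //= lerDl sumr_ge0 // => s _; exact: sqr_ge0.
Qed.

Lemma eucl_dist_le_coord x y (c : R) : 0 <= c ->
  (forall t, `|x ord0 t - y ord0 t| <= c) -> eucl_dist x y <= c * Num.sqrt k%:R.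
Proof.
move=> c0 le_c; rewrite -(ger0_norm c0) -sqrtr_sqr -sqrtrM ?sqr_ge0 //.
rewrite ler_sqrt ?mulr_ge0 ?sqr_ge0 //.
rewrite mulr_natr -[k in _ *+ k]card_ord -sumr_const.
by apply: ler_sum => t _; rewrite -real_normK ?num_real // lerXn2r ?nnegrE.
Qed.

End EuclideanDistance.

Section Grid.
Variables (R : realType) (k : nat) (g : R).
Hypothesis g_gt0 : 0 < g.
Implicit Types (x y : 'rV[R]_k).

Lemma in_nbhd_boxesC x y : in_nbhd_boxes g x y -> in_nbhd_boxes g y x.
Proof. by move=> nb t; rewrite distrC. Qed.

Lemma distr_divr (a b : R) : `|a / g - b / g| = `|a - b| / g.
Proof. by rewrite -mulrBl normrM [`|g^-1|]gtr0_norm ?invr_gt0. Qed.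

Lemma in_nbhd_boxes_of_dist_lt x y : eucl_dist x y < g -> in_nbhd_boxes g x y.
Proof.
move=> lt_g t; rewrite distrC; apply: floor_dist_le1.
rewrite distr_divr ltr_pdivrMr // mul1r.
exact: le_lt_trans (coord_dist_le_eucl_dist _ _ _) lt_g.
Qed.

Lemma eucl_dist_le_of_in_nbhd_boxes x y :
  in_nbhd_boxes g x y -> eucl_dist x y <= 2 * g * Num.sqrt k%:R.
Proof.
move=> nb; apply: eucl_dist_le_coord => [|t]; first by rewrite mulr_ge0 ?ltW.
have := dist_lt2_of_floor (nb t); rewrite distrC distr_divr.
by rewrite ltr_pdivrMr // => /ltW.
Qed.

End Grid.

Lemma delta_le_eucl_dist (R : realType) (k : nat) (S : set 'rV[R]_k) x y :
  S x -> S y -> x <> y -> delta S <= eucl_dist x y.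
Proof.
move=> Sx Sy xy; apply: ge_inf; last by exists x, y.
by exists 0 => _ [? [? [_ _ _ ->]]]; exact: sqrtr_ge0.
Qed.

Lemma exists_switch (P : nat -> Prop) m n : (m <= n)%N -> P m -> ~ P n ->
  exists i, [/\ (m <= i < n)%N, P i & ~ P i.+1].
Proof.
elim: n => [|n IH]; first by rewrite leqn0 => /eqP ->.
rewrite leq_eqVlt ltnS => /orP[/eqP -> Pn /(_ Pn) [] | le_mn Pm nPn].
have [Pn|nPn'] := pselect (P n); first by exists n; rewrite ltnSn le_mn.
have [i [/andP[le_mi lt_in] Pi nPi]] := IH le_mn Pm nPn'.
by exists i; rewrite le_mi ltnW.
Qed.

Section GridSparsePartition.
Variables (R : realType) (k : nat) (S : set 'rV[R]_k) (L : nat).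
Variables (Ss : nat -> set 'rV[R]_k) (p q : nat -> 'rV[R]_k).
Hypothesis partition : grid_sparse_partition S L Ss p q.
Hypothesis k_gt0 : (0 < k)%N.

Let d i := eucl_dist (p i) (q i).
Let g i := d i / (6 * k%:R).

Lemma level_succ_sub i : (1 <= i <= L)%N -> Ss i.+1 `<=` Ss i.
Proof. by case: partition => _ _ succ _ hi x /(succ i hi x) []. Qed.

Lemma level_sub i : (1 <= i <= L.+1)%N -> Ss i `<=` S.
Proof.
case: partition => S1 _ _ _; elim: i => [//|[_ _|i IH /andP[_ hi]]].
  by rewrite S1.
have hi1 : (1 <= i.+1 <= L)%N by [].
by move=> x /(level_succ_sub hi1); apply: IH; exact: ltnW.
Qed.

Lemma pivot_dist_gt0 i : (1 <= i <= L)%N -> 0 < d i.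
Proof.
by case: partition => _ pivot _ _ /pivot[_ _ qp _]; apply: eucl_dist_gt0 => /esym.
Qed.

Lemma grid_side_gt0 i : (1 <= i <= L)%N -> 0 < g i.
Proof. by move=> hi; rewrite divr_gt0 ?pivot_dist_gt0 // mulr_gt0 ?ltr0n. Qed.

Lemma removed_dist_ge_grid_side i x y : (1 <= i <= L)%N ->
  Ss i x -> ~ Ss i.+1 x -> Ss i y -> x <> y -> g i <= eucl_dist x y.
Proof.
case: partition => _ _ succ _ hi Six nSx Siy xy.
rewrite leNgt; apply/negP => near.
have sparse_x : sparse (Ss i) (g i) x.
  by apply: contrapT => nsp; apply: nSx; apply/(succ i hi x).
apply: (sparse_x y Siy (nesym xy)).
exact: (in_nbhd_boxes_of_dist_lt (grid_side_gt0 hi) near).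
Qed.

Lemma pivot_dist_succ_le i : (1 <= i < L)%N -> d i.+1 <= 2 * g i * Num.sqrt k%:R.
Proof.
case: partition => _ pivot succ _ /andP[i1 iL].
have hi : (1 <= i <= L)%N by rewrite i1 ltnW.
have [Sp _ _ nearest] := pivot i.+1 (iL : (1 <= i.+1 <= L)%N).
have [Sip not_sparse] := (succ i hi (p i.+1)).1 Sp.
have [y [Siy yp nb]] :
    exists y, [/\ Ss i y, y <> p i.+1 & in_nbhd_boxes (g i) (p i.+1) y].
  apply: contrapT => none; apply: not_sparse => y Siy yp nb.
  by apply: none; exists y.
have Sy : Ss i.+1 y.
  apply/(succ i hi y); split=> // sparse_y.
  exact: (sparse_y _ Sip (nesym yp) (in_nbhd_boxesC nb)).
apply: le_trans (nearest y Sy yp) _.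
exact: (eucl_dist_le_of_in_nbhd_boxes (grid_side_gt0 hi) nb).
Qed.

Lemma pivot_dist_succ2_lt i : (1 <= i)%N -> (i.+2 <= L)%N -> d i.+2 < g i.
Proof.
move=> i1 iL.
have d1 : d i.+1 <= 2 * g i * Num.sqrt k%:R.
  by apply: pivot_dist_succ_le; rewrite i1 ltnW.
have d2 : d i.+2 <= 2 * g i.+1 * Num.sqrt k%:R by exact: pivot_dist_succ_le.
have di : 0 < d i by apply: pivot_dist_gt0; rewrite i1 (ltnW (ltnW iL)).
rewrite /g in d1 d2 *; move: (d i) (d i.+1) (d i.+2) di d1 d2 => e0 e1 e2 e0_gt0.
have [s s_gt0 ->] : exists2 s : R, 0 < s & k%:R = s ^+ 2.
  by exists (Num.sqrt k%:R); rewrite ?sqr_sqrtr ?sqrtr_gt0 ?ltr0n.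
rewrite sqrtr_sqr gtr0_norm //.
have contract e : 2 * (e / (6 * s ^+ 2)) * s = e / (3 * s) by field; lra.
rewrite !contract !ler_pdivlMr ?mulr_gt0 // ltr_pdivlMr ?mulr_gt0 ?exprn_gt0 //.
move=> le_e1 le_e2; nra.
Qed.

Lemma delta_lt_dist_removed i a b : (1 <= i)%N -> (i.+2 <= L)%N ->
  Ss i a -> Ss i b -> ~ Ss i.+1 a -> a <> b -> delta S < eucl_dist a b.
Proof.
case: (partition) => _ pivot _ _ i1 iL Sia Sib nSa ab.
have hi : (1 <= i <= L)%N by rewrite i1 (ltnW (ltnW iL)).
have hi2 : (1 <= i.+2 <= L)%N by rewrite iL.
have sub2 : Ss i.+2 `<=` S by apply: level_sub; exact: leqW.
have [Sp2 Sq2 qp2 _] := pivot _ hi2.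
apply: le_lt_trans (delta_le_eucl_dist (sub2 _ Sp2) (sub2 _ Sq2) (nesym qp2)) _.
apply: lt_le_trans (pivot_dist_succ2_lt i1 iL) _.
exact: removed_dist_ge_grid_side hi Sia nSa Sib ab.
Qed.

End GridSparsePartition.

Lemma ceil_log3_gt0 (R : realType) (k : nat) : (0 < k)%N ->
  0 < Num.ceil (ln (2 * Num.sqrt k%:R) / ln 3 : R).
Proof.
move=> k_gt0; have s1 : 1 <= Num.sqrt k%:R :> R.
  by rewrite -{1}sqrtr1 ler_sqrt ?ler1n.
by rewrite ceil_gt0 divr_gt0 // ln_gt0 //; lra.
Qed.

Unset Implicit Arguments.

Theorem lemma6p1 (R : realType) (k : nat) (S : set 'rV[R]_k) (L : nat)
  (Ss : nat -> set 'rV[R]_k) (p q : nat -> 'rV[R]_k) (j : nat) :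
  finite_set S ->
  grid_sparse_partition S L Ss p q ->
  (j%:Z = L%:Z - Num.ceil (ln (2 * Num.sqrt (k%:R)) / ln 3 : R)) ->
  (1 <= j)%N ->
  forall a b : 'rV[R]_k, S a -> ~ (Ss j a) -> S b -> ~ (Ss j b) -> a <> b ->
  delta S < eucl_dist a b.
Proof.
move=> _ part def_j j1 a b Sa nSja Sb _ ab.
have k_gt0 : (0 < k)%N.
  rewrite lt0n; apply/eqP => k0; apply: ab; apply/rowP => t.
  by have := ltn_ord t; rewrite {2}k0.
have jL : (j < L)%N by move: def_j (ceil_log3_gt0 R k_gt0); lia.
have S1ab : Ss 1%N a /\ Ss 1%N b by case: part => -> _ _ _.
have [i [/andP[i1 ij] [Sia Sib] nSi]] :=
  @exists_switch (fun i => Ss i a /\ Ss i b) 1 j j1 S1ab (fun h => nSja h.1).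
have iL : (i.+2 <= L)%N by apply: leq_trans jL.
have [Sa1|nSa] := pselect (Ss i.+1 a).
  have nSb : ~ Ss i.+1 b by move=> Sb1; apply: nSi.
  rewrite eucl_distC.
  exact: (delta_lt_dist_removed part k_gt0 i1 iL Sib Sia nSb (nesym ab)).
exact: (delta_lt_dist_removed part k_gt0 i1 iL Sia Sib nSa ab).
Qed.
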